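(* Let $W$ be an $m\times m$ diagonal matrix with positive diagonal entries and $\bar W=W\otimes I_n$. If $\ker(C\bar J')=\operatorname{span}\bar I$ (equivalently, $\bar{\mathbb N}$ is well-configured), then $\bar W\bar J C'C\bar J'$ has exactly $n$ eigenvalues equal to zero (counted with algebraic multiplicity) and all its remaining eigenvalues are real and positive.
   Context: Setup: neighbor graph $\mathbb N$ is a directed graph on $\{1,\dots,m\}$ with $d$ arcs, enumerated $e_1,\dots,e_d$; each arc $e_k=(j,i)$ carries a real matrix $C_{e_k}=C_{ji}$ with $n$ columns. The incidence matrix $J\in\mathbb R^{m\times d}$ has in column $k$ a $+1$ in row $i$ and a $-1$ in row $j$ when $e_k=(j,i)$, zeros elsewhere. $C=\operatorname{blockdiag}(C_{e_1},\dots,C_{e_d})$, $\bar J=J\otimes I_n$, $\bar I=\mathbf 1_m\otimes I_n$, and $\operatorname{span}\bar I$ is the column space of $\bar I$; $'$ denotes transpose. $\bar{\mathbb N}$ is well-configured (for all $x_1,\dots,x_m\in\mathbb R^n$, $C_{ji}x_i=C_{ji}x_j$ for every arc $(j,i)$ implies $x_1=\cdots=x_m$) iff $\ker(C\bar J')=\operatorname{span}\bar I$. *)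

(* Kronecker product: mathcomp-real-closed's mxtens
   (A *t B, standard index convention (i,a) |-> i*n + a). *)
From HB Require Import structures.
From mathcomp Require Import all_boot all_order all_algebra.
From mathcomp Require Import mxtens.
From mathcomp Require Import reals.
Set Implicit Arguments. Unset Strict Implicit. Unset Printing Implicit Defensive.
Import Order.TTheory GRing.Theory Num.Theory.
Local Open Scope ring_scope.

Definition incidence (R : pzRingType) (m d : nat) (tl hd : 'I_d -> 'I_m) : 'M[R]_(m, d) :=
  \matrix_(i < m, k < d) ((i == hd k)%:R - (i == tl k)%:R).

Definition blockdiagC (R : pzRingType) (d n : nat) (r : 'I_d -> nat)
  (Cs : forall k : 'I_d, 'M[R]_(r k, n)) : 'M[R]_(\sum_(k < d) r k, \sum_(k < d) n) :=
  \mxblock_(i < d, j < d) (if i == j then Cs i else 0).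

Lemma sum_const_n (d n : nat) : (d * n = \sum_(k < d) n)%N.
Proof. by rewrite sum_nat_const card_ord. Qed.

Definition Jbar (R : pzRingType) (m d n : nat) (tl hd : 'I_d -> 'I_m) : 'M[R]_(m * n, d * n) :=
  incidence R tl hd *t (1%:M : 'M[R]_n).
Arguments Jbar R {m d} n tl hd.

(* C Jbar' : the transpose of Jbar, with its row count d*n identified with
   the column count sum_(k<d) n of C. *)
Definition CJbarT (R : pzRingType) (m d n : nat) (tl hd : 'I_d -> 'I_m)
  (r : 'I_d -> nat) (Cs : forall k : 'I_d, 'M[R]_(r k, n)) : 'M[R]_(\sum_(k < d) r k, m * n) :=
  blockdiagC Cs *m castmx (sum_const_n d n, erefl) (Jbar R n tl hd)^T.

Definition Ibar (R : pzRingType) (m n : nat) : 'M[R]_(m * n, 1 * n) :=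
  (const_mx 1 : 'M[R]_(m, 1)) *t (1%:M : 'M[R]_n).

From HB Require Import structures.
From mathcomp Require Import all_boot all_order all_algebra.
From mathcomp Require Import mxtens.
From mathcomp Require Import reals complex zify.
Set Implicit Arguments. Unset Strict Implicit. Unset Printing Implicit Defensive.
Import Order.TTheory GRing.Theory Num.Theory.
Local Open Scope ring_scope.

(* Write A = C Jbar'.  With S = sqrt(W) (x) I_n, which is symmetric, invertible
   and squares to Wbar, the matrix Wbar A' A is similar to the Gram matrix
   (A S)'(A S).  A real Gram matrix G'G is symmetric, hence diagonalizable (the
   spectral theorem applied to its Hermitian complexification), its eigenvalues
   are nonnegative since v G'G = a v gives |v G'|^2 = a |v|^2, and it has exactly
   rank G nonzero eigenvalues.  Finally rank (A S) = rank A = mn - dim ker A = mn - n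
   because ker A = span Ibar, so 0 has multiplicity n and the other mn - n
   eigenvalues are positive. *)

Lemma char_poly_conj (F : fieldType) n (P A : 'M[F]_n) : P \in unitmx ->
  char_poly (invmx P *m A *m P) = char_poly A.
Proof.
move=> Pu.
have conjE : char_poly_mx (invmx P *m A *m P) =
    map_mx polyC (invmx P) *m char_poly_mx A *m map_mx polyC P.
  rewrite /char_poly_mx mulmxBr mulmxBl -!map_mxM; congr (_ - _).
  by rewrite -mulmxA mul_scalar_mx -scalemxAr -map_mxM mulVmx // map_mx1 scalemx1.
rewrite /char_poly conjE !det_mulmx mulrC mulrA !det_map_mx -rmorphM -det_mulmx mulmxV //.
by rewrite det1 rmorph1 mul1r.
Qed.

Lemma mxrank_diag (F : fieldType) n (d : 'rV[F]_n) :
  \rank (diag_mx d) = #|[pred i | d 0 i != 0]|.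
Proof.
elim: n d => [|n IH] d.
  by rewrite thinmx0 mxrank0 eq_card0 // => -[].
change (\rank (@diag_mx _ (1 + n) d) = #|[pred i : 'I_(1 + n) | d 0 i != 0]|).
rewrite -{1}[d](@hsubmxK _ 1 1 n) diag_mx_row rank_diag_block_mx IH.
rewrite -!sum1_card [RHS]big_mkcond big_split_ord /= big_mkcond /=.
congr (_ + _)%N; last by apply: eq_bigr => i _; rewrite !inE mxE.
have -> : diag_mx (lsubmx (d : 'rV_(1 + n)))
         = ((d : 'rV_(1 + n)) 0 (lshift n 0))%:M.
  by apply/matrixP => i j; rewrite !ord1 !mxE.
rewrite big_ord1 !inE rank_rV; congr (nat_of_bool (~~ _)).
apply/eqP/eqP => [/matrixP/(_ 0 0)|->]; last exact: raddf0.
by rewrite !mxE mulr1n.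
Qed.

Section Gram.
Variables (R : realFieldType) (p N : nat) (G : 'M[R]_(p, N)).

Lemma rV_mul_tr_ge0 k (u : 'rV[R]_k) : 0 <= (u *m u^T) 0 0.
Proof. by rewrite !mxE; apply: sumr_ge0 => j _; rewrite !mxE -expr2 sqr_ge0. Qed.

Lemma rV_mul_tr_eq0 k (u : 'rV[R]_k) : ((u *m u^T) 0 0 == 0) = (u == 0).
Proof.
apply/eqP/eqP => [|->]; last by rewrite mul0mx mxE.
have sq_ge0 i : true -> 0 <= u 0 i * u^T i 0 by rewrite mxE -expr2 sqr_ge0.
rewrite mxE => /(psumr_eq0P sq_ge0) u0; apply/rowP => j; apply/eqP.
by have /eqP := u0 j isT; rewrite mxE -expr2 sqrf_eq0 mxE.
Qed.

Lemma kermx_gram : (kermx (G^T *m G) == kermx G^T)%MS.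
Proof.
apply/andP; split; last by apply/sub_kermxP; rewrite mulmxA mulmx_ker mul0mx.
apply/sub_kermxP/row_matrixP => i; rewrite row0 row_mul.
apply/eqP; rewrite -rV_mul_tr_eq0 trmx_mul trmxK mulmxA -(mulmxA _ G^T G).
by rewrite -row_mul mulmx_ker row0 mul0mx mxE.
Qed.

Lemma mxrank_gram : \rank (G^T *m G) = \rank G.
Proof.
have := eqmx_rank kermx_gram; rewrite !mxrank_ker mxrank_tr.
have := rank_leq_row (G^T *m G); have := rank_leq_col G; lia.
Qed.

Lemma gram_eigenvalue_ge0 a : eigenvalue (G^T *m G) a -> 0 <= a.
Proof.
case/eigenvalueP => v vK v0.
have normE : (v *m G^T *m (v *m G^T)^T) 0 0 = a * (v *m v^T) 0 0.
  by rewrite trmx_mul trmxK mulmxA -(mulmxA v G^T G) vK -scalemxAl mxE.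
have := rV_mul_tr_ge0 (v *m G^T); rewrite normE pmulr_lge0 // lt0r.
by rewrite rV_mul_tr_eq0 v0 rV_mul_tr_ge0.
Qed.

End Gram.

Lemma symmetric_mx_spectrum (R : rcfType) N (K : 'M[R]_N) : K^T = K ->
  exists2 mu : 'I_N -> R, char_poly K = \prod_(i < N) ('X - (mu i)%:P)
                        & \rank K = #|[pred i | mu i != 0]|.
Proof.
move=> Ksym; pose f : {rmorphism R -> R[i]} := real_complex R.
pose Kc := map_mx f K.
have Kc_herm : Kc \is hermsymmx.
  apply: realsym_hermsym; last first.
    by apply/mxOverP => i j; rewrite mxE; apply/complex_realP; exists (K i j).
  apply/is_hermitianmxP; rewrite expr0 scale1r.
  by apply/matrixP => i j; rewrite !mxE -[in LHS]Ksym mxE.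
have /orthomx_spectralP := hermitian_normalmx Kc_herm.
set P := spectralmx Kc; set lam := spectral_diag Kc => KcE.
have Pu : P \in unitmx := spectral_unit Kc.
have /mxOverP lam_real := hermitian_spectral_diag_real Kc_herm.
pose mu i := complex.Re (lam 0 i).
have lamE i : lam 0 i = f (mu i) by rewrite /mu /f /= RRe_real ?lam_real.
exists mu.
  apply: (map_poly_inj f); rewrite map_char_poly -/Kc KcE char_poly_conj //.
  rewrite char_poly_trig ?diag_mx_is_trig // rmorph_prod.
  by apply: eq_bigr => i _; rewrite /= map_polyXsubC mxE eqxx mulr1n lamE.
rewrite -(mxrank_map f) -/Kc KcE mxrankMfree ?row_free_unit //.
rewrite -mxrank_tr trmx_mul mxrankMfree ?row_free_unit ?unitmx_tr ?unitmx_inv //.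
rewrite tr_diag_mx mxrank_diag; apply: eq_card => i.
by rewrite !inE lamE fmorph_eq0.
Qed.

Lemma prod_XsubC_split0 (R : comNzRingType) N (mu : 'I_N -> R)
    (nz := [pred i | mu i != 0]) :
  \prod_(i < N) ('X - (mu i)%:P)
    = 'X ^+ (N - #|nz|) * \prod_(x <- [seq mu i | i in nz]) ('X - x%:P).
Proof.
rewrite big_image (bigID nz) /= mulrC; congr (_ * _).
rewrite -[N in (N - _)%N]card_ord -(cardC nz) addKn -prodr_const.
by apply: eq_bigr => i /negPn/eqP ->; rewrite subr0.
Qed.

Lemma char_poly_gram (R : rcfType) p N (G : 'M[R]_(p, N)) :
  exists s : seq R, [/\ size s = \rank G, all (fun x => 0 < x) s &
    char_poly (G^T *m G) = 'X ^+ (N - \rank G) * \prod_(x <- s) ('X - x%:P)].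
Proof.
have [mu charE rankE] : exists2 mu : 'I_N -> R,
    char_poly (G^T *m G) = \prod_(i < N) ('X - (mu i)%:P)
    & \rank G = #|[pred i | mu i != 0]|.
  by rewrite -mxrank_gram; apply: symmetric_mx_spectrum; rewrite trmx_mul trmxK.
have mu_ge0 i : 0 <= mu i.
  apply: (gram_eigenvalue_ge0 (G := G)); rewrite eigenvalue_root_char charE.
  by rewrite /root horner_prod (bigD1 i) //= hornerXsubC subrr mul0r.
exists [seq mu i | i in [pred i | mu i != 0]]; split.
- by rewrite size_image rankE.
- by apply/allP => _ /imageP [i nz_i ->]; rewrite lt0r mu_ge0 andbT.
- by rewrite charE rankE prod_XsubC_split0.
Qed.

Lemma tensmx11 (R : comPzRingType) m n :
  (1%:M : 'M[R]_m) *t (1%:M : 'M[R]_n) = 1%:M.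
Proof.
apply/matrixP => i j.
case: (mxtens_indexP i) => i0 i1; case: (mxtens_indexP j) => j0 j1.
rewrite tensmxE !mxE (inj_eq (can_inj (@mxtens_indexK _ _))) xpair_eqE.
by case: (i0 == j0); rewrite ?mul1r ?mul0r.
Qed.

Lemma unitmx_tens1 (F : fieldType) m n (A : 'M[F]_m) :
  A \in unitmx -> A *t (1%:M : 'M[F]_n) \in unitmx.
Proof.
move=> Au; suff /mulmx1_unit[] :
    (A *t 1%:M) *m (invmx A *t (1%:M : 'M_n)) = 1%:M by [].
by rewrite tensmx_mul mulmxV // mulmx1 tensmx11.
Qed.

Lemma diag_mx_sqrt (R : rcfType) m (W : 'M[R]_m) :
  is_diag_mx W -> (forall i, 0 < W i i) ->
  exists D : 'M[R]_m, [/\ D \in unitmx, D^T = D & D *m D = W].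
Proof.
move=> /is_diag_mxP Wdiag Wpos; exists (diag_mx (\row_i Num.sqrt (W i i))); split.
- rewrite unitmxE det_diag unitfE; apply/prodf_neq0 => i _.
  by rewrite mxE gt_eqF ?sqrtr_gt0.
- exact: tr_diag_mx.
rewrite mulmx_diag; apply/matrixP => i j; rewrite !mxE.
have [<-|neq_ij] := eqVneq i j; last by rewrite mulr0n Wdiag.
by rewrite mulr1n -expr2 sqr_sqrtr ?ltW.
Qed.

Lemma mxrank_Ibar (F : fieldType) m n : (0 < m)%N -> \rank (Ibar F m n) = n.
Proof.
move=> m_gt0; apply/eqP; rewrite eqn_leq.
rewrite (leq_trans (rank_leq_col _)) ?mul1n //=.
pose e0 : 'M[F]_(1, m) := delta_mx 0 (Ordinal m_gt0).
have e0I : e0 *m const_mx 1 = 1%:M.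
  by rewrite -rowE row_const; apply/matrixP => a b; rewrite !ord1 !mxE.
have := mxrankM_maxr (e0 *t (1%:M : 'M_n)) (Ibar F m n).
rewrite /Ibar tensmx_mul mulmx1 e0I tensmx11 mxrank1.
by rewrite [in X in (X <= _)%N -> _]mul1n.
Qed.

Theorem lemma5 (R : realType) (m d n : nat) (tl hd : 'I_d -> 'I_m)
  (r : 'I_d -> nat) (Cs : forall k : 'I_d, 'M[R]_(r k, n)) (W : 'M[R]_m) :
  (0 < m)%N ->
  (forall k, tl k != hd k) ->
  injective (fun k => (tl k, hd k)) ->
  is_diag_mx W -> (forall i, 0 < W i i) ->
  (kermx (CJbarT tl hd Cs)^T == (Ibar R m n)^T)%MS ->
  exists s : seq R,
    [/\ size s = (m * n - n)%N, all (fun x => 0 < x) s &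
      char_poly ((W *t (1%:M : 'M[R]_n)) *m (CJbarT tl hd Cs)^T *m CJbarT tl hd Cs)
      = 'X ^+ n * \prod_(x <- s) ('X - x%:P)].
Proof.
(* The arcs need not be simple: only well-configuredness is used. *)
move=> m_gt0 _ _ W_diag W_pos kerA; set A := CJbarT tl hd Cs.
have n_le_mn : (n <= m * n)%N by rewrite leq_pmull.
have rankA : \rank A = (m * n - n)%N.
  move/eqmx_rank: kerA; rewrite mxrank_ker !mxrank_tr mxrank_Ibar //.
  by rewrite -/A; have := rank_leq_col A; lia.
have [D [D_unit D_sym DD]] := diag_mx_sqrt W_diag W_pos.
pose S := D *t (1%:M : 'M_n).
have S_unit : S \in unitmx := unitmx_tens1 n D_unit.
have S_sym : S^T = S by rewrite trmx_tens D_sym trmx1.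
have SS : S *m S = W *t 1%:M by rewrite tensmx_mul DD mulmx1.
have rankAS : \rank (A *m S) = \rank A by rewrite mxrankMfree ?row_free_unit.
have [s [size_s s_pos charE]] := char_poly_gram (A *m S).
exists s; split => //; first by rewrite size_s rankAS.
rewrite -(char_poly_conj _ S_unit) -SS.
have -> : invmx S *m (S *m S *m A^T *m A) *m S = (A *m S)^T *m (A *m S).
  by rewrite [(A *m S)^T]trmx_mul S_sym !mulmxA mulVmx // mul1mx.
by rewrite charE rankAS rankA subKn.
Qed.
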